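(* Let $(X,d)$ be a metric space and let $u,u_1,u_2,\ldots\in F_{USCG}(X)$. Then the following statements are equivalent: (i) $u_n\stackrel{\Gamma}{\longrightarrow}u$; (ii) $[u_n]_\alpha$ Kuratowski converges to $[u]_\alpha$ for almost every $\alpha\in(0,1)$ (with respect to Lebesgue measure); (iii) $[u_n]_\alpha$ Kuratowski converges to $[u]_\alpha$ for all $\alpha\in(0,1)\setminus P(u)$; (iv) there is a dense subset $P$ of $(0,1)\setminus P(u)$ such that $[u_n]_\alpha$ Kuratowski converges to $[u]_\alpha$ for all $\alpha\in P$; (v) there is a countable dense subset $P$ of $(0,1)\setminus P(u)$ such that $[u_n]_\alpha$ Kuratowski converges to $[u]_\alpha$ for all $\alpha\in P$.
   Context: A fuzzy set on $X$ is a function $u:X\to[0,1]$, with $\alpha$-cuts $[u]_\alpha=\{x: u(x)\ge\alpha\}$ for $\alpha\in(0,1]$ and $[u]_0=\overline{\{u>0\}}$. $F_{USC}(X)$ is the set of fuzzy sets with all $\alpha$-cuts ($\alpha\in[0,1]$) non-empty and closed; $F_{USCG}(X)=\{u\in F_{USC}(X): [u]_\alpha\text{ is compact for all }\alpha\in(0,1]\}$. For sets $C_n\subseteq X$: $\liminf_n C_n=\{x: x=\lim_n x_n, x_n\in C_n\}$, $\limsup_n C_n=\{x: x=\lim_j x_{n_j}, x_{n_j}\in C_{n_j}\}$; $C_n$ Kuratowski converges to $C$ if $C=\liminf_n C_n=\limsup_n C_n$. ${\rm end}\,u=\{(x,t)\in X\times[0,1]: u(x)\ge t\}$, with $X\times[0,1]$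 metrized by $\overline{d}((x,\alpha),(y,\beta))=d(x,y)+|\alpha-\beta|$. $u_n\stackrel{\Gamma}{\longrightarrow}u$ means ${\rm end}\,u_n$ Kuratowski converges to ${\rm end}\,u$. A number $\alpha\in(0,1)$ is a platform point of $u$ if $\overline{\{u>\alpha\}}\subsetneqq[u]_\alpha$; $P(u)$ is the set of platform points of $u$. *)

From HB Require Import structures.
From mathcomp Require Import all_boot all_order all_algebra.
From mathcomp Require Import all_classical all_reals all_analysis.
Set Implicit Arguments. Unset Strict Implicit. Unset Printing Implicit Defensive.
Import Order.TTheory GRing.Theory Num.Theory.
Import numFieldNormedType.Exports.
Local Open Scope classical_set_scope.
Local Open Scope ring_scope.

Section Defs.
Context {R : realType}.

Definition dconv {T : Type} (D : T -> T -> R) (xs : nat -> T) (x : T) : Prop :=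
  (fun n => D (xs n) x) @ \oo --> (0 : R).

Definition kur_liminf {T : Type} (D : T -> T -> R) (C : nat -> set T) : set T :=
  [set x | exists xs : nat -> T, (forall n, C n (xs n)) /\ dconv D xs x].

Definition kur_limsup {T : Type} (D : T -> T -> R) (C : nat -> set T) : set T :=
  [set x | exists (nj : nat -> nat) (xs : nat -> T),
     (forall j, (nj j < nj j.+1)%N) /\ (forall j, C (nj j) (xs j)) /\ dconv D xs x].

Definition kur_conv {T : Type} (D : T -> T -> R) (C : nat -> set T) (A : set T) : Prop :=
  A = kur_liminf D C /\ A = kur_limsup D C.

Context {X : metricType R}.

Definition cut (u : X -> R) (a : R) : set X :=
  if a == 0 then closure [set x | 0 < u x] else [set x | a <= u x].

Definition is_fuzzy (u : X -> R) : Prop := forall x, 0 <= u x <= 1.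

Definition F_USC (u : X -> R) : Prop :=
  is_fuzzy u /\ forall a, 0 <= a <= 1 -> cut u a !=set0 /\ closed (cut u a).

Definition F_USCG (u : X -> R) : Prop :=
  F_USC u /\ forall a, 0 < a <= 1 -> compact (cut u a).

Definition dbar (p q : X * R) : R := mdist p.1 q.1 + `|p.2 - q.2|.

Definition endo (u : X -> R) : set (X * R) :=
  [set p | 0 <= p.2 <= 1 /\ p.2 <= u p.1].

Definition Gamma_conv (us : nat -> X -> R) (u : X -> R) : Prop :=
  kur_conv dbar (fun n => endo (us n)) (endo u).

Definition cut_kconv (us : nat -> X -> R) (u : X -> R) (a : R) : Prop :=
  kur_conv mdist (fun n => cut (us n) a) (cut u a).

Definition platform (u : X -> R) : set R :=
  [set a | 0 < a < 1 /\ closure [set x | a < u x] `<` cut u a].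

End Defs.

Definition nonplat {R : realType} {X : metricType R} (u : X -> R) : set R :=
  [set a : R | 0 < a < 1] `\` platform u.

Definition dense_in {R : realType} (P S : set R) : Prop :=
  P `<=` S /\ forall s, S s -> forall e : R, 0 < e -> exists2 p, P p & `|p - s| < e.

(* At a level a that is not a platform point, [u]_a is the closure of {u > a},
   so Gamma-convergence gives Kuratowski convergence of the a-cuts: the lower
   limit is reached through the endographs at heights above a, the upper limit
   through the endographs at height a.  Conversely, Kuratowski convergence of
   the cuts on any set of levels dense in (0,1) forces Gamma-convergence: a
   point (x,t) of end u is approximated at a good level just below t, and a
   limit point (x,t) of the endographs with u x < t is ruled out by a good
   level between u x and t.  Finally every platform point is the supremum of u
   over a ball taken from a countable family (the positive support of u is
   sigma-compact), so P(u) is countable; hence (0,1) \ P(u) has full measure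
   and is dense, and all five conditions reduce to density of good levels. *)

From Pilot Require Import Defs.
From HB Require Import structures.
From mathcomp Require Import all_boot all_order all_algebra.
From mathcomp Require Import all_classical all_reals all_analysis.
From mathcomp Require Import finmap lra.
Import Order.TTheory GRing.Theory Num.Theory.
Import numFieldNormedType.Exports.
Local Open Scope classical_set_scope.
Local Open Scope ring_scope.

(* Plain [cut] would resolve to [sequences.cut]. *)
Local Notation cut := Defs.cut.

Section real_levels.
Context {R : realType}.
Implicit Types (A L M N P S : set R).

Definition dense_levels (L : set R) : Prop :=
  forall c d, 0 <= c -> c < d -> d <= 1 -> exists2 p, c < p < d & L p.

Lemma approx_in_segment (a b t : R) :
  (forall e, 0 < e -> exists2 s, a <= s <= b & `|s - t| < e) -> a <= t <= b.
Proof.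
move=> approx; apply/andP; split.
  apply/ler_addgt0Pr => e /approx [s /andP[ha _]]; rewrite ltr_distlC; lra.
apply/ler_addgt0Pr => e /approx [s /andP[_ hb]]; rewrite ltr_distlC; lra.
Qed.

Lemma dense_levelsS {L M} : (forall a, 0 < a < 1 -> L a -> M a) ->
  dense_levels L -> dense_levels M.
Proof.
move=> LM Ldense c d c0 cd d1; have [p /andP[cp pd] Lp] := Ldense c d c0 cd d1.
exists p; rewrite ?cp ?pd //; apply: LM Lp.
by rewrite (le_lt_trans c0 cp) (lt_le_trans pd d1).
Qed.

Lemma dense_in_dense_levels {P S} : dense_in P S -> dense_levels S -> dense_levels P.
Proof.
move=> [_ P_dense] Sdense c d c0 cd d1; have [q /andP[cq qd] Sq] := Sdense c d c0 cd d1.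
have e0 : 0 < Num.min (q - c) (d - q) by rewrite lt_min !subr_gt0 cq qd.
have [p Pp] := P_dense q Sq _ e0.
rewrite lt_min !ltr_distlC => /andP[/andP[? ?] /andP[? ?]].
by exists p => //; apply/andP; split; lra.
Qed.

Lemma negligible_dense_levels {N} : (@lebesgue_measure R).-negligible N ->
  dense_levels (~` N).
Proof.
move=> [A [mA A0 NA]] c d _ cd _; apply: contrapT => N_itv.
have itvA : [set` `]c, d[] `<=` A.
  move=> p /=; rewrite in_itv /= => /andP[cp pd]; apply: NA; apply: contrapT => Np.
  by apply: N_itv; exists p; rewrite ?cp.
have := le_measure lebesgue_measure (_ : [set` `]c, d[] \in measurable)
  (_ : A \in measurable) itvA.
move=> /(_ (mem_set (measurable_itv _)) (mem_set mA)) itv_le.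
have : (lebesgue_measure [set` `]c, d[] <= 0)%E.
  by apply: le_trans itv_le _; rewrite le_eqVlt; apply/orP; left; apply/eqP.
by rewrite lebesgue_measure_itv /= lte_fin cd -EFinD lee_fin subr_le0 leNgt cd.
Qed.

Lemma countable_negligible {A} : countable A -> (@lebesgue_measure R).-negligible A.
Proof.
move=> cA; apply/negligibleP; last exact: countable_lebesgue_measure0.
by apply: countable_measurable => // t; exact: measurable_set1.
Qed.

Lemma countable_dense_subset S : exists P, countable P /\ dense_in P S.
Proof.
pose r (m : nat) : R := m.+1%:R^-1.
pose I := [set i : rat * nat | exists2 s, S s & `|s - ratr i.1| < r i.2].
have /choice [g gP] : forall i, exists y, I i -> S y /\ `|y - ratr i.1| < r i.2.
  move=> i; have [[s Ss si]|NIi] := pselect (I i); first by exists s.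
  by exists 0.
exists (g @` I); split; first exact: sub_countable (card_image_le g I) (countableP _).
split=> [_ [i /gP[Sgi _] <-] // | s Ss e e0].
have [m me] : exists m, r m < e / 2.
  by have [m] := ltr_add_invr (divr_gt0 e0 (ltr0n R 2)); rewrite add0r; exists m.
have rm : 0 < r m by rewrite invr_gt0.
have sm : s - r m < s + r m by lra.
have [q] := rat_in_itvoo sm; rewrite in_itv /= => /andP[q1 q2].
have Iqm : I (q, m) by exists s => //=; rewrite ltr_distlC q1 q2.
exists (g (q, m)); first by exists (q, m).
have [_] := gP _ Iqm; rewrite !ltr_distlC /= => /andP[h1 h2].
apply/andP; split; lra.
Qed.

Lemma sup_image_attained {T : Type} (f : T -> R) (B : set T) y :
  B y -> (forall z, B z -> f z <= f y) -> sup (f @` B) = f y.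
Proof.
move=> By fy_ub; have ub : ubound (f @` B) (f y) by move=> _ [z Bz <-]; exact: fy_ub.
apply/eqP; rewrite eq_le ge_sup //=; last by exists (f y), y.
by apply: sup_upper_bound; [split; [exists (f y), y | exists (f y)] | exists y].
Qed.

End real_levels.

Section kuratowski.
Context {R : realType} {T : Type} (D : T -> T -> R).

Lemma dconvP xs x : dconv D xs x <->
  forall e, 0 < e -> exists N, forall n, (N <= n)%N -> `|D (xs n) x| < e.
Proof.
split=> [/cvgrPdist_lt cvx e e0 | H].
  have [N _ HN] := cvx e e0.
  by exists N => n /HN; rewrite sub0r normrN.
apply/cvgrPdist_lt => e /H [N HN]; exists N => // n /HN /=.
by rewrite sub0r normrN.
Qed.

Lemma kur_liminf_sub_limsup C : kur_liminf D C `<=` kur_limsup D C.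
Proof. by move=> x [xs [Cxs cvx]]; exists id, xs. Qed.

Lemma kur_conv_sub C A :
  A `<=` kur_liminf D C -> kur_limsup D C `<=` A -> kur_conv D C A.
Proof.
move=> Ainf supA; have infsup := @kur_liminf_sub_limsup C.
split; apply/seteqP; split=> //.
- exact: subset_trans infsup supA.
- exact: subset_trans Ainf infsup.
Qed.

Lemma kur_liminf_approx C x : kur_liminf D C x ->
  forall e, 0 < e -> exists N, forall n, (N <= n)%N -> exists2 y, C n y & D y x < e.
Proof.
move=> [xs [Cxs /dconvP cvx]] e /cvx [N HN].
by exists N => n /HN Dn; exists (xs n) => //; exact: le_lt_trans (ler_norm _) Dn.
Qed.

Lemma approx_kur_liminf C x : (forall y, 0 <= D y x) -> (forall n, C n !=set0) ->
  (forall e, 0 < e -> exists N, forall n, (N <= n)%N -> exists2 y, C n y & D y x < e) ->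
  kur_liminf D C x.
Proof.
move=> D0 Cne approx.
pose dist n := [set D y x | y in C n].
have dist_inf n : has_inf (dist n).
  split; first by have [y Cy] := Cne n; exists (D y x), y.
  by exists 0 => _ [y _ <-].
have /choice [xs xsP] n : exists y, C n y /\ D y x < inf (dist n) + n.+1%:R^-1.
  have n0 : 0 < n.+1%:R^-1 :> R by rewrite invr_gt0.
  have [_ [y Cy <-] ?] := inf_adherent n0 (dist_inf n).
  by exists y.
exists xs; split=> [n|]; first by case: (xsP n).
apply/dconvP => e e0; have e2 : 0 < e / 2 by rewrite divr_gt0.
have [N HN] := approx _ e2; have [k ke] := ltr_add_invr e2; rewrite add0r in ke.
exists (maxn N k) => n; rewrite geq_max => /andP[Nn kn].
have [y Cy Dy] := HN n Nn; have [_ Dxs] := xsP n.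
have infD : inf (dist n) <= D y x by apply: ge_inf; [case: (dist_inf n)|exists y].
have nk : n.+1%:R^-1 <= k.+1%:R^-1 :> R by rewrite lef_pV2 ?posrE ?ler_nat.
rewrite ger0_norm // [e]splitr; apply: lt_le_trans Dxs _.
by apply: lerD; [apply: le_trans infD (ltW Dy) | apply: le_trans nk (ltW ke)].
Qed.

Lemma kur_limsup_tail C (nj : nat -> nat) (xs : nat -> T) x J :
  (forall j, (nj j < nj j.+1)%N) -> (forall j, (J <= j)%N -> C (nj j) (xs j)) ->
  dconv D xs x -> kur_limsup D C x.
Proof.
move=> nj_incr Cxs /dconvP cvx.
exists (fun j => nj (j + J)%N), (fun j => xs (j + J)%N); split; [|split].
- by move=> j; rewrite addSn.
- by move=> j; apply: Cxs; rewrite leq_addl.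
apply/dconvP => e /cvx [N HN]; exists N => n Nn.
by apply: HN; rewrite (leq_trans Nn) ?leq_addr.
Qed.

End kuratowski.

Arguments kur_liminf_approx {R T D C x}.
Arguments kur_limsup_tail {R T D C nj xs x J}.

Section compact_separable.
Context {R : realType} {X : metricType R}.

Lemma compact_countable_dense (A : set X) : compact A ->
  exists2 S : set X, countable S &
    forall x, A x -> forall e, 0 < e -> exists2 d, S d & ball d e x.
Proof.
move=> cA; have [[x0 _]|A0] := pselect (A !=set0); last first.
  by exists set0 => // x Ax; case: A0; exists x.
(* [compact_cover] is stated for pointed spaces; any point of A will do. *)
pose Xp := HB.pack_for ptopologicalType X (isPointed.Build X x0).
have /choice [F Fcover] k : exists F : {fset X},
    A `<=` cover [set` F] (fun d => (ball d k.+1%:R^-1)°).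
  move: cA; rewrite (@compact_cover Xp) => /(_ X A (fun d => (ball d k.+1%:R^-1)°)).
  case=> [d _|x Ax|F _ AF]; [exact: open_interior | | by exists F].
  by exists x => //; exact: nbhsx_ballx.
exists (\bigcup_k [set` F k]); first exact: bigcup_countable.
move=> x Ax e e0; have [k ke] := ltr_add_invr e0; rewrite add0r in ke.
have [d Fd /interior_subset dx] := Fcover k x Ax.
by exists d; [exists k | apply: le_ball (ltW ke) _ dx].
Qed.

End compact_separable.

Section endograph.
Context {R : realType} {X : metricType R}.
Implicit Types (v : X -> R) (vs : nat -> X -> R).

Lemma cutP v a x : 0 < a -> cut v a x <-> a <= v x.
Proof. by move=> a0; rewrite /cut (negbTE (lt0r_neq0 a0)). Qed.

Lemma endo_cut v a x : 0 < a <= 1 -> endo v (x, a) <-> cut v a x.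
Proof.
case/andP=> a0 a1; rewrite cutP //.
by split=> [[]//|avx]; split=> //=; rewrite ltW.
Qed.

Lemma endo_level0 v x : is_fuzzy v -> endo v (x, 0).
Proof. by move=> vP; split=> /=; [rewrite lexx ler01 | case/andP: (vP x)]. Qed.

Lemma mdist_le_dbar (p q : X * R) : mdist p.1 q.1 <= dbar p q.
Proof. by rewrite lerDl. Qed.

Lemma dist_snd_le_dbar (p q : X * R) : `|p.2 - q.2| <= dbar p q.
Proof. by rewrite lerDr mdist_ge0. Qed.

Lemma dbar_ge0 (p q : X * R) : 0 <= dbar p q.
Proof. exact: le_trans (normr_ge0 _) (dist_snd_le_dbar p q). Qed.

Lemma dconv_dbar_level (xs : nat -> X) (x : X) (a : R) :
  dconv mdist xs x -> dconv dbar (fun n => (xs n, a)) (x, a).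
Proof.
rewrite /dconv; suff -> : (fun n => dbar (xs n, a) (x, a)) = fun n => mdist (xs n) x by [].
by apply/funext => n; rewrite /dbar subrr normr0 addr0.
Qed.

Lemma kur_limsup_cut_endo {vs a x} : 0 < a <= 1 ->
  kur_limsup mdist (fun n => cut (vs n) a) x ->
  kur_limsup dbar (fun n => endo (vs n)) (x, a).
Proof.
move=> a01 [nj [xs [nj_incr [cut_xs cvx]]]].
exists nj, (fun j => (xs j, a)); split; [by []|split].
- by move=> j; apply/endo_cut.
- exact: dconv_dbar_level.
Qed.

Lemma kur_limsup_endo_level {vs x t} :
  kur_limsup dbar (fun n => endo (vs n)) (x, t) -> 0 <= t <= 1.
Proof.
move=> [nj [ps [_ [endo_ps /dconvP cvp]]]]; apply: approx_in_segment => e /cvp [N HN].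
exists (ps N).2; first by case: (endo_ps N).
apply: le_lt_trans (dist_snd_le_dbar _ (x, t)) _.
exact: le_lt_trans (ler_norm _) (HN N (leqnn N)).
Qed.

Lemma kur_limsup_endo_cut {vs x t} p : 0 < p < t ->
  kur_limsup dbar (fun n => endo (vs n)) (x, t) ->
  kur_limsup mdist (fun n => cut (vs n) p) x.
Proof.
case/andP=> p0 pt [nj [ps [nj_incr [endo_ps /dconvP cvp]]]].
have tp : 0 < t - p by rewrite subr_gt0.
have [J HJ] := cvp _ tp.
apply: (@kur_limsup_tail _ _ _ _ nj (fun j => (ps j).1) x J nj_incr).
  move=> j /HJ Dj; rewrite cutP //; case: (endo_ps j) => _ /= svs.
  have := le_lt_trans (dist_snd_le_dbar (ps j) (x, t)) (le_lt_trans (ler_norm _) Dj).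
  rewrite ltr_distlC /= => /andP[_]; lra.
apply/dconvP => e /cvp [N HN]; exists N => n /HN.
rewrite !ger0_norm ?dbar_ge0 ?mdist_ge0//; exact: le_lt_trans (mdist_le_dbar _ _).
Qed.

Variables (u : X -> R) (us : nat -> X -> R).

Lemma nonplat_cut_sub_closure {a} : closed (cut u a) -> nonplat u a ->
  cut u a `<=` closure [set x | a < u x].
Proof.
move=> cl [/= a01 npa] x ux; apply: contrapT => nclx; apply: npa; split=> //.
have a0 : 0 < a by case/andP: a01.
split; last by move/(_ x ux).
move/closure_id: cl => ->; apply: closureS => y /= /ltW.
by rewrite cutP.
Qed.

Lemma cut_sub_kur_liminf a : is_fuzzy u -> 0 < a ->
  (forall n, cut (us n) a !=set0) ->
  endo u `<=` kur_liminf dbar (fun n => endo (us n)) ->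
  closure [set x | a < u x] `<=` kur_liminf mdist (fun n => cut (us n) a).
Proof.
move=> uP a0 cut_ne endo_inf x clx.
apply: approx_kur_liminf => // [y|e e0]; first exact: mdist_ge0.
have e2 : 0 < e / 2 by rewrite divr_gt0.
have [y [/= ay]] := clx _ (nbhsx_ballx x _ e2); rewrite ballEmdist /= => xy.
have /endo_inf y_inf : endo u (y, u y) by split=> //=; rewrite uP.
have m0 : 0 < Num.min (e / 2) (u y - a) by rewrite lt_min e2 subr_gt0.
have [N HN] := kur_liminf_approx y_inf _ m0.
exists N => n /HN [[z s] [_ /= szn]]; rewrite lt_min => /andP[dz1 dz2].
have zy := le_lt_trans (mdist_le_dbar (z, s) (y, u y)) dz1.
have := le_lt_trans (dist_snd_le_dbar (z, s) (y, u y)) dz2.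
rewrite ltr_distlC /= => /andP[_ s_gt_a]; exists z.
  by rewrite cutP //; lra.
have := metric_triangle z y x; rewrite (metric_sym x y) in xy; lra.
Qed.

Lemma kur_limsup_sub_cut a : 0 < a <= 1 ->
  kur_limsup dbar (fun n => endo (us n)) `<=` endo u ->
  kur_limsup mdist (fun n => cut (us n) a) `<=` cut u a.
Proof. by move=> a01 sup_endo x /(kur_limsup_cut_endo a01) /sup_endo /endo_cut; apply. Qed.

Lemma Gamma_conv_cut_kconv : F_USC u -> (forall n, F_USC (us n)) ->
  Gamma_conv us u -> forall a, nonplat u a -> cut_kconv us u a.
Proof.
move=> [uP ucut] usF [endo_inf endo_sup] a npa; have [/= /andP[a0 a1] _] := npa.
have a01 : 0 <= a <= 1 by rewrite !ltW.
apply: kur_conv_sub.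
- apply: subset_trans (nonplat_cut_sub_closure (ucut a a01).2 npa) _.
  apply: cut_sub_kur_liminf => // [n|]; first exact: ((usF n).2 a a01).1.
  by rewrite -endo_inf.
- by apply: kur_limsup_sub_cut; rewrite ?a0 ?(ltW a1) // endo_sup.
Qed.

Lemma endo_sub_kur_liminf : (forall n, is_fuzzy (us n)) ->
  dense_levels (cut_kconv us u) ->
  endo u `<=` kur_liminf dbar (fun n => endo (us n)).
Proof.
move=> usP good [x t] [/= /andP[t0 t1] tu]; apply: approx_kur_liminf.
- by move=> q; exact: dbar_ge0.
- by move=> n; exists (x, 0); exact: endo_level0.
move=> e e0; have e2 : 0 < e / 2 by rewrite divr_gt0.
have [te|et] := ltP t (e / 2).
  exists 0%N => n _; exists (x, 0); first exact: endo_level0.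
  by rewrite /dbar /= mdistxx sub0r normrN ger0_norm // add0r; lra.
have [p /andP[tp pt] [cut_inf _]] := good (t - e / 2) t ltac:(lra) ltac:(lra) t1.
have p0 : 0 < p by lra.
have : cut u p x by rewrite cutP //; lra.
rewrite cut_inf => /kur_liminf_approx /(_ _ e2) [N HN].
exists N => n /HN [y yp xy]; exists (y, p).
  by apply/endo_cut => //; rewrite p0 /=; lra.
by rewrite /dbar /= ltr0_norm; lra.
Qed.

Lemma kur_limsup_sub_endo : is_fuzzy u -> dense_levels (cut_kconv us u) ->
  kur_limsup dbar (fun n => endo (us n)) `<=` endo u.
Proof.
move=> uP good [x t] xt; have /andP[t0 t1] := kur_limsup_endo_level xt.
split=> /=; first by rewrite t0 t1.
rewrite leNgt; apply/negP => uxt; have /andP[ux0 _] := uP x.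
have [p /andP[up pt] [_ cut_sup]] := good _ _ ux0 uxt t1.
have : cut u p x by rewrite cut_sup; apply: kur_limsup_endo_cut xt; lra.
by rewrite cutP; lra.
Qed.

Lemma dense_levels_Gamma_conv : is_fuzzy u -> (forall n, is_fuzzy (us n)) ->
  dense_levels (cut_kconv us u) -> Gamma_conv us u.
Proof.
move=> uP usP good.
by apply: kur_conv_sub; [exact: endo_sub_kur_liminf | exact: kur_limsup_sub_endo].
Qed.

End endograph.

Arguments Gamma_conv_cut_kconv {R X u us}.
Arguments dense_levels_Gamma_conv {R X u us}.

Section platform.
Context {R : realType} {X : metricType R}.
Variable u : X -> R.

Lemma platform_isolated {a} : platform u a ->
  exists x e, [/\ 0 < e, a <= u x & forall y, ball x e y -> u y <= a].
Proof.
move=> [/andP[a0 _] [_ not_sup]].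
have [x ux nclx] : exists2 x, cut u a x & ~ closure [set x | a < u x] x.
  apply: contrapT => H; apply: not_sup => x ux; apply: contrapT => nclx.
  by apply: H; exists x.
have [B Bx AB0] : exists2 B, nbhs x B & ~ ([set x | a < u x] `&` B !=set0).
  apply: contrapT => H; apply: nclx => B Bx; apply: contrapT => AB0.
  by apply: H; exists B.
move/nbhs_ballP: Bx => [e e0 eB]; exists x, e; split=> //; first by rewrite -cutP.
by move=> y /eB By; rewrite leNgt; apply/negP => ay; apply: AB0; exists y.
Qed.

Lemma platform_countable : F_USCG u -> countable (platform u).
Proof.
move=> [_ cut_compact].
pose r k : R := k.+1%:R^-1.
have r_gt0 k : 0 < r k by rewrite invr_gt0.
have /choice [S S_dense] n : exists S : set X, countable S /\
    forall x, cut u (r n) x -> forall e, 0 < e -> exists2 d, S d & ball d e x.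
  have r01 : 0 < r n <= 1 by rewrite r_gt0 invf_le1 ?ler1n.
  by have [S ? ?] := compact_countable_dense _ (cut_compact _ r01); exists S.
pose level kd := sup (u @` ball kd.2 (r kd.1)).
have countable_levels : countable (level @` ([set: nat] `*` \bigcup_n S n)).
  apply: sub_countable (card_image_le _ _) _; apply: countableX => //.
  by apply: bigcup_countable => // n _; case: (S_dense n).
apply: sub_countable (subset_card_le _) countable_levels => a pa.
have [x [e [e0 ax ball_le]]] := platform_isolated pa.
have a0 : 0 < a by case: pa => /andP[].
have [k ke] := ltr_add_invr (divr_gt0 e0 (ltr0n R 2)); rewrite add0r in ke.
have [n nx] := ltr_add_invr (lt_le_trans a0 ax); rewrite add0r in nx.
have [d Sd dx] := (S_dense n).2 x ltac:(by rewrite cutP // ltW) _ (r_gt0 k).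
exists (k, d); first by split=> //; exists n.
have sub_ball : ball d (r k) `<=` ball x e.
  move=> z /(ball_triangle (ball_sym dx)); apply: le_ball.
  by rewrite [e]splitr lerD // ltW.
rewrite /level (@sup_image_attained _ _ u _ x) //.
- by apply/eqP; rewrite eq_le ax andbT; apply: ball_le; exact: ballxx.
- by move=> z /sub_ball /ball_le uz; apply: le_trans uz ax.
Qed.

End platform.

Arguments platform_countable {R X u}.

Theorem theorem3p7 (R : realType) (X : metricType R)
    (u : X -> R) (us : nat -> X -> R) :
  F_USCG u -> (forall n, F_USCG (us n)) ->
  [/\ Gamma_conv us u <->
        (@lebesgue_measure R).-negligible
          [set a : R | 0 < a < 1 /\ ~ cut_kconv us u a],
      Gamma_conv us u <-> (forall a, nonplat u a -> cut_kconv us u a),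
      Gamma_conv us u <->
        (exists P : set R, dense_in P (nonplat u) /\
           forall a, P a -> cut_kconv us u a)
    & Gamma_conv us u <->
        (exists P : set R, countable P /\ dense_in P (nonplat u) /\
           forall a, P a -> cut_kconv us u a)].
Proof.
move=> Fu Fus; have usF n := (Fus n).1.
have plat_null := countable_negligible (platform_countable Fu).
have nonplat_dense : dense_levels (nonplat u).
  by apply: dense_levelsS (negligible_dense_levels plat_null) => a a01 npa.
have fwd := Gamma_conv_cut_kconv Fu.1 usF.
have bwd := dense_levels_Gamma_conv Fu.1.1 (fun n => (usF n).1).
have dense_bwd P : dense_in P (nonplat u) -> (forall a, P a -> cut_kconv us u a) ->
    Gamma_conv us u.
  move=> Pdense Pgood; apply/bwd/(dense_levelsS (fun a _ => Pgood a)).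
  exact: dense_in_dense_levels Pdense nonplat_dense.
split; split.
- move=> G; apply: negligibleS plat_null => a [a01 bad].
  by apply: contrapT => npa; apply/bad/fwd.
- move=> null; apply/bwd/(dense_levelsS _ (negligible_dense_levels null)).
  by move=> a a01 good; apply: contrapT => bad; apply: good.
- exact: fwd.
- by move=> good; apply/bwd/(dense_levelsS _ nonplat_dense) => a _ /good.
- move=> G; exists (nonplat u); split; last exact: fwd G.
  by split=> // s Ss e e0; exists s; rewrite // subrr normr0.
- by move=> [P [Pdense Pgood]]; exact: dense_bwd Pdense Pgood.
- move=> G; have [P [cP Pdense]] := countable_dense_subset (nonplat u).
  exists P; do 2!split=> //; move=> a /(proj1 Pdense a); exact: (fwd G a).
- by move=> [P [_ [Pdense Pgood]]]; exact: dense_bwd Pdense Pgood.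
Qed.
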